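(* Let $(X,d)$ be a metric space with $|X|\ge 2$, $a\in X$, and let $\tilde x$ be a sequence of points of $X$ that is $d$-statistically convergent to $a$. Then for every infinite subsequence $\tilde x'$ of $\tilde x$ with $\limsup_{n\to\infty}\frac{|K_{\tilde x'}(n)|}{n}=0$ there exist a sequence $\tilde y$ of points of $X$ and a subsequence $\tilde y'$ of $\tilde y$ such that: (i) $\tilde y$ and $\tilde x$ are statistically equivalent and $K_{\tilde x'}=K_{\tilde y'}$; (ii) $\tilde y$ is $d$-statistically convergent to $a$; (iii) $\tilde y'$ is not $d$-statistically convergent.
   Context: For a subsequence $\tilde z'=(z_{n(k)})$ of a sequence $(z_n)$ (with $(n(k))$ strictly increasing), $K_{\tilde z'}=\{n(k):k\in\mathbb N\}$ and $K_{\tilde z'}(n)=\{m\in K_{\tilde z'}:m\le n\}$. A sequence $(z_k)$ is $d$-statistically convergent to $a$ if for every $\epsilon>0$, $\lim_{n\to\infty}\frac1n|\{k\le n: d(z_k,a)\ge\epsilon\}|=0$, and $d$-statistically convergent if this holds for some $a\in X$; subsequences are regarded as sequences indexed by $k$. A set $M\subseteq\mathbb N$ is statistical dense if $\lim_{n\to\infty}|\{m\in M:m\le n\}|/n=1$; sequences $(x_n),(y_n)$ are statistically equivalent if $x_n=y_n$ for all $n$ in some statistical dense $M$. *)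

From HB Require Import structures.
From mathcomp Require Import all_boot all_order all_algebra.
From mathcomp Require Import all_classical all_reals all_analysis.
Set Implicit Arguments. Unset Strict Implicit. Unset Printing Implicit Defensive.
Import Order.TTheory GRing.Theory Num.Theory.
Import numFieldNormedType.Exports.
Local Open Scope ring_scope.
Local Open Scope classical_set_scope.

(* Convention: sequences are indexed by nat starting at 0; "k <= n" in the
   paper (1-based) becomes "k < n" here (0-based): the first n terms. *)

Definition is_metric (R : realType) (X : Type) (d : X -> X -> R) : Prop :=
  [/\ forall x y, 0 <= d x y,
      forall x y, d x y = 0 <-> x = y,
      forall x y, d x y = d y x &
      forall x y z, d x z <= d x y + d y z].

Definition count_upto (M : set nat) (n : nat) : nat :=
  count (fun m => `[< M m >]) (iota 0 n).

Definition dens_ratio (R : realType) (M : set nat) : R^nat :=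
  fun n => (count_upto M n)%:R / n%:R.

Definition dstat_conv_to (R : realType) (X : Type) (d : X -> X -> R)
    (z : nat -> X) (a : X) : Prop :=
  forall eps : R, 0 < eps ->
    dens_ratio R [set k | eps <= d (z k) a] @ \oo --> (0 : R).

Definition dstat_convergent (R : realType) (X : Type) (d : X -> X -> R)
    (z : nat -> X) : Prop :=
  exists a : X, dstat_conv_to d z a.

Definition stat_dense (R : realType) (M : set nat) : Prop :=
  dens_ratio R M @ \oo --> (1 : R).

Definition stat_equiv (R : realType) (X : Type) (x y : nat -> X) : Prop :=
  exists M : set nat, stat_dense R M /\ (forall n, M n -> x n = y n).

(* a subsequence is given by a strictly increasing index map phi;
   the subsequence of z is z \o phi and K = range phi *)
Definition strict_incr (phi : nat -> nat) : Prop :=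
  forall i j, (i < j)%N -> (phi i < phi j)%N.

(* Overwrite x along the subsequence by alternating two distinct points u and v,
   keeping x elsewhere. The modified indices form the range of phi, which has
   density zero, so the new sequence is statistically equivalent to x and still
   d-statistically converges to a. Along phi it alternates u, v, ...; any
   candidate limit z is at distance at least d(u,v)/2 from u or from v, so about
   half of the terms of the subsequence stay d(u,v)/2 away from z. *)
From HB Require Import structures.
From mathcomp Require Import all_boot all_order all_algebra.
From mathcomp Require Import all_classical all_reals all_analysis.
From mathcomp Require Import lra zify.
Set Implicit Arguments. Unset Strict Implicit. Unset Printing Implicit Defensive.
Import Order.TTheory GRing.Theory Num.Theory.
Import numFieldNormedType.Exports.
Local Open Scope ring_scope.
Local Open Scope classical_set_scope.

Lemma count_upto_le (M : set nat) n : (count_upto M n <= n)%N.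
Proof. by rewrite /count_upto -{2}(size_iota 0 n) count_size. Qed.

Lemma subset_count_upto (M N : set nat) n : M `<=` N ->
  (count_upto M n <= count_upto N n)%N.
Proof. by move=> MN; apply: sub_count => k /asboolP /MN /asboolP. Qed.

Lemma count_uptoU (M N : set nat) n :
  (count_upto (M `|` N) n <= count_upto M n + count_upto N n)%N.
Proof.
rewrite /count_upto -count_predUI; apply: leq_trans (leq_addr _ _).
by apply: sub_count => k /asboolP [Mk|Nk]; apply/orP; [left|right]; apply/asboolP.
Qed.

Lemma count_uptoC (M : set nat) n :
  (count_upto (~` M) n + count_upto M n)%N = n.
Proof.
rewrite /count_upto addnC -{3}(size_iota 0 n) -(count_predC (fun m => `[< M m >])).
by congr (_ + _)%N; apply: eq_count => k /=; rewrite asbool_neg.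
Qed.

Lemma count_parity (b : bool) n :
  (n <= 2 * count_upto [set k | odd k = b] n + 1)%N.
Proof.
suff: (2 * count_upto [set k | odd k = b] n + (odd n && b) =
       n + (odd n && ~~ b))%N by case: (odd n); case: b; lia.
rewrite /count_upto; elim: n => [|n IH]; first by case: b.
have -> : iota 0 n.+1 = iota 0 n ++ [:: n] by rewrite -addn1 iotaD.
rewrite count_cat /= addn0 mulnDr; move: IH.
by case: asboolP => /= [<-|]; case: (odd n) => //=; case: b => //=; lia.
Qed.

Section DensRatio.
Variable R : realType.

Lemma dens_ratio_ge0 (M : set nat) n : 0 <= dens_ratio R M n.
Proof. by rewrite /dens_ratio divr_ge0. Qed.

Lemma dens_ratio_le1 (M : set nat) n : dens_ratio R M n <= 1.
Proof.
case: n => [|n]; first by rewrite /dens_ratio invr0 mulr0.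
by rewrite /dens_ratio ler_pdivrMr ?ltr0n // mul1r ler_nat count_upto_le.
Qed.

Lemma subset_dens_ratio (M N : set nat) n : M `<=` N ->
  dens_ratio R M n <= dens_ratio R N n.
Proof.
by move=> MN; rewrite ler_wpM2r ?invr_ge0 // ler_nat subset_count_upto.
Qed.

Lemma dens_ratioU (M N : set nat) n :
  dens_ratio R (M `|` N) n <= dens_ratio R M n + dens_ratio R N n.
Proof. by rewrite -mulrDl -natrD ler_wpM2r ?invr_ge0 // ler_nat count_uptoU. Qed.

Lemma dens_ratioC (M : set nat) n : (0 < n)%N ->
  dens_ratio R (~` M) n = 1 - dens_ratio R M n.
Proof.
move=> n_gt0; have n_neq0 : n%:R != 0 :> R by rewrite pnatr_eq0 -lt0n.
rewrite /dens_ratio -[X in X - _](divff n_neq0) -mulrBl; congr (_ * _).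
by rewrite -{2}(count_uptoC M n) natrD addrK.
Qed.

Lemma limn_sup_eq0_cvg (u : R^nat) : (forall n, 0 <= u n <= 1) ->
  limn_sup u = 0 -> u @ \oo --> 0.
Proof.
move=> u01 sup0.
have ub : has_ubound (range u) by exists 1 => _ [n _ <-]; case/andP: (u01 n).
have lb : has_lbound (range u) by exists 0 => _ [n _ <-]; case/andP: (u01 n).
have sups_cvg := cvg_sups_inf ub lb.
have inf0 : inf (range (sups u)) = 0 by rewrite -sup0; apply/esym/cvg_lim.
rewrite inf0 in sups_cvg; apply: (squeeze_cvgr _ (cvg_cst 0) sups_cvg).
apply: nearW => n; case/andP: (u01 n) => -> _ /=.
apply: ub_le_sup; last by exists n => /=.
by case: ub => b ub_b; exists b => _ [k _ <-]; apply: ub_b; exists k.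
Qed.

Lemma dens_ratio_cvg0_stat_denseC (M : set nat) :
  dens_ratio R M @ \oo --> 0 -> stat_dense R (~` M).
Proof.
move=> M0.
have C1 : (fun n => 1 - dens_ratio R M n) @ \oo --> (1 : R).
  by have := cvgB (cvg_cst (1 : R)) M0; rewrite subr0; apply.
apply: (squeeze_cvgr _ C1 C1).
by exists 1%N => // n n_gt0 /=; rewrite dens_ratioC // lexx.
Qed.

Lemma dens_ratio_not_cvg0 (M : set nat) :
  (forall n, n <= 2 * count_upto M n + 1)%N -> ~ dens_ratio R M @ \oo --> 0.
Proof.
move=> Mbig /cvgr_lt /(_ (1 / 3)) [|N _ MN]; first by rewrite divr_gt0.
pose n := maxn N 3; have n3 : (3 <= n)%N by rewrite leq_maxr.
have := MN n (leq_maxl _ _); rewrite /= /dens_ratio ltr_pdivrMr ?ltr0n; last by lia.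
have : (n <= 3 * count_upto M n)%N by have := Mbig n; lia.
rewrite -(ler_nat R) natrM; move: n3; rewrite -(ler_nat R).
by set c := (count_upto M n)%:R; set m := n%:R; lra.
Qed.

End DensRatio.

Section StatConvergence.
Variables (R : realType) (X : Type) (d : X -> X -> R).

Lemma dstat_conv_to_eq_outside (x y : nat -> X) (a : X) (N : set nat) :
  dens_ratio R N @ \oo --> 0 -> (forall n, ~ N n -> y n = x n) ->
  dstat_conv_to d x a -> dstat_conv_to d y a.
Proof.
move=> N0 yx xa eps eps_gt0.
have sum0 : (fun n => dens_ratio R [set k | eps <= d (x k) a] n +
    dens_ratio R N n) @ \oo --> (0 : R).
  by have := cvgD (xa eps eps_gt0) N0; rewrite addr0; apply.
apply: (squeeze_cvgr _ (cvg_cst 0) sum0); apply: nearW => n.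
rewrite dens_ratio_ge0 /=; apply: le_trans (dens_ratioU _ _ _ _).
apply: subset_dens_ratio => k /= le_eps.
by have [|/yx yxk] := pselect (N k); [right|left; rewrite -yxk].
Qed.

Hypothesis hd : is_metric d.

Lemma alternating_not_dstat_convergent (u v : X) : u <> v ->
  ~ dstat_convergent d (fun k => if odd k then u else v).
Proof.
case: hd => d_ge0 d_eq0 dC dT uv [z alt_z].
have eps_gt0 : 0 < d u v / 2.
  by rewrite divr_gt0 // lt_neqAle d_ge0 andbT eq_sym; apply/eqP => /d_eq0.
have far_parity b : ~ (forall k, odd k = b ->
    d u v / 2 <= d (if odd k then u else v) z).
  move=> far; apply: (@dens_ratio_not_cvg0 R _ _ (alt_z _ eps_gt0)) => n.
  apply: leq_trans (count_parity b n) _.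
  by rewrite leq_add2r leq_mul2l subset_count_upto ?orbT // => k /far.
have [far_u|near_u] := lerP (d u v / 2) (d u z).
- by apply: (far_parity true) => k ->.
- apply: (far_parity false) => k ->.
  by have := dT u z v; rewrite (dC z v); lra.
Qed.

End StatConvergence.

Lemma strict_incr_inj (phi : nat -> nat) : strict_incr phi -> injective phi.
Proof.
by move=> phi_incr i j eq_ij; case: (ltngtP i j) => // /phi_incr; rewrite eq_ij ltnn.
Qed.

Section Patch.
Variables (X : Type) (x : nat -> X) (phi : nat -> nat) (w : nat -> X).

Definition patch (n : nat) : X :=
  if pselect (range phi n) is left phi_n then w (s2val (cid2 phi_n)) else x n.

Lemma patch_range : injective phi -> forall k, patch (phi k) = w k.
Proof.
move=> phi_inj k; rewrite /patch; case: pselect => [phi_k|]; last by case; exists k.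
by case: cid2 => j _ /= /phi_inj ->.
Qed.

Lemma patch_outside n : ~ range phi n -> patch n = x n.
Proof. by rewrite /patch; case: pselect. Qed.

End Patch.

Theorem theorem6 (R : realType) (X : Type) (d : X -> X -> R)
  (hd : is_metric d) (hX : exists u v : X, u <> v) (a : X) (x : nat -> X)
  (hx : dstat_conv_to d x a) :
  forall phi : nat -> nat, strict_incr phi ->
    limn_sup (dens_ratio R (range phi)) = 0 ->
    exists (y : nat -> X) (psi : nat -> nat),
      strict_incr psi /\
      (stat_equiv R y x /\ range phi = range psi) /\
      dstat_conv_to d y a /\
      ~ dstat_convergent d (y \o psi).
Proof.
move=> phi phi_incr sup0; case: hX => u [v uv].
have phi0 : dens_ratio R (range phi) @ \oo --> 0.
  by apply: limn_sup_eq0_cvg => // n; rewrite dens_ratio_ge0 dens_ratio_le1.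
pose alt k := if odd k then u else v.
have y_out := @patch_outside _ x phi alt.
exists (patch x phi alt), phi; split=> //; split; [split=> //|split].
- exists (~` range phi); split; last by move=> n /y_out.
  exact: dens_ratio_cvg0_stat_denseC.
- exact: dstat_conv_to_eq_outside phi0 y_out hx.
- have -> : patch x phi alt \o phi = alt.
    by apply/funext => k /=; rewrite patch_range //; apply: strict_incr_inj.
  exact: (alternating_not_dstat_convergent hd uv).
Qed.
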